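(* For any positive integers $M,N,K,S$, any $\epsilon_0>0$ and any data matrices $\mathbf{Y}^{(1)},\dots,\mathbf{Y}^{(S)}\in\mathbb{R}^{M\times N}$, the solution sets $\Omega^*$ and $\dot\Omega$ are nonempty and compact.
   Context: $\mathcal{O}(M)$ is the group of real $M\times M$ orthogonal matrices. For $\Phi\in\mathcal{O}(M)$ set $\mathbb{E}_S([\Phi\mathbf{Y}]_{mn}^2)=\frac1S\sum_{s=1}^S[\Phi\mathbf{Y}^{(s)}]_{mn}^2$, and let $\mathbb{E}_S(|\Phi\mathbf{Y}|^{\circ2})$ be the $M\times N$ matrix with these entries. $F_K=\{(\mathbf{W},\mathbf{H})\in\mathbb{R}_+^{M\times K}\times\mathbb{R}_+^{K\times N}:\ \|\mathbf{w}_k\|_1=1\ \text{for all }k\}$, where $\mathbf{w}_k$ is the $k$-th column of $\mathbf{W}$. For entrywise nonnegative $M\times N$ matrices $\mathbf{A},\mathbf{B}$, $D_{\epsilon_0}(\mathbf{A}|\mathbf{B})=\sum_{m,n}\Big(\frac{A_{mn}+\epsilon_0}{B_{mn}+\epsilon_0}-\log\frac{A_{mn}+\epsilon_0}{B_{mn}+\epsilon_0}-1\Big)$. Define $C_S(\Phi,\mathbf{W},\mathbf{H})=\sum_{m,n}\Big(\frac{\mathbb{E}_S([\Phi\mathbf{Y}]_{mn}^2)+\epsilon_0}{[\mathbf{W}\mathbf{H}]_{mn}+\epsilon_0}+\log([\mathbf{W}\mathbf{H}]_{mn}+\epsilon_0)\Big)$, $L_S(\Phi)=MN+\sum_{m,n}\log(\mathbb{E}_S([\Phi\mathbf{Y}]_{mn}^2)+\epsilon_0)$,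 $I_S(\Phi,\mathbf{W},\mathbf{H})=D_{\epsilon_0}(\mathbb{E}_S(|\Phi\mathbf{Y}|^{\circ2})\,|\,\mathbf{W}\mathbf{H})$ (so that $C_S=L_S+I_S$). The TL-NMF solution set is $\Omega^*=\arg\min\{C_S(\Phi,\mathbf{W},\mathbf{H}):\Phi\in\mathcal{O}(M),(\mathbf{W},\mathbf{H})\in F_K\}$, and the JD+NMF solution set is $\dot\Omega=\{(\dot\Phi,\dot{\mathbf{W}},\dot{\mathbf{H}}):\dot\Phi\in\arg\min_{\Phi\in\mathcal{O}(M)}L_S(\Phi),\ (\dot{\mathbf{W}},\dot{\mathbf{H}})\in\arg\min_{(\mathbf{W},\mathbf{H})\in F_K}C_S(\dot\Phi,\mathbf{W},\mathbf{H})\}$. *)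

From HB Require Import structures.
From mathcomp Require Import all_boot all_order all_algebra.
From mathcomp Require Import all_classical all_reals all_analysis.
Set Implicit Arguments. Unset Strict Implicit. Unset Printing Implicit Defensive.
Import Order.TTheory GRing.Theory Num.Theory.
Import numFieldTopology.Exports numFieldNormedType.Exports.
Local Open Scope ring_scope.
Local Open Scope classical_set_scope.

Section TLNMF.
Variables (R : realType) (M N K S : nat) (eps0 : R)
  (Y : 'I_S -> 'M[R]_(M, N)).

Definition orthogonal (Phi : 'M[R]_M) : Prop := Phi^T *m Phi = 1%:M.

Definition ES (Phi : 'M[R]_M) (m : 'I_M) (n : 'I_N) : R :=
  S%:R^-1 * \sum_(s < S) ((Phi *m Y s) m n) ^+ 2.

Definition FK (W : 'M[R]_(M, K)) (H : 'M[R]_(K, N)) : Prop :=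
  (forall m k, 0 <= W m k) /\ (forall k n, 0 <= H k n) /\
  (forall k : 'I_K, \sum_(m < M) `|W m k| = 1).

Definition CS (Phi : 'M[R]_M) (W : 'M[R]_(M, K)) (H : 'M[R]_(K, N)) : R :=
  \sum_(m < M) \sum_(n < N)
    ((ES Phi m n + eps0) / ((W *m H) m n + eps0) + ln ((W *m H) m n + eps0)).

Definition LS (Phi : 'M[R]_M) : R :=
  (M * N)%:R + \sum_(m < M) \sum_(n < N) ln (ES Phi m n + eps0).

Definition Ddiv (A B : 'M[R]_(M, N)) : R :=
  \sum_(m < M) \sum_(n < N)
    ((A m n + eps0) / (B m n + eps0) - ln ((A m n + eps0) / (B m n + eps0)) - 1).

Definition IS (Phi : 'M[R]_M) (W : 'M[R]_(M, K)) (H : 'M[R]_(K, N)) : R :=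
  Ddiv (\matrix_(m, n) ES Phi m n) (W *m H).

Local Notation triple := ('M[R]_M * 'M[R]_(M, K) * 'M[R]_(K, N))%type.

Definition Omega_star : set triple :=
  [set x | [/\ orthogonal x.1.1, FK x.1.2 x.2 &
     forall Phi W H, orthogonal Phi -> FK W H -> CS x.1.1 x.1.2 x.2 <= CS Phi W H]].

Definition Omega_dot : set triple :=
  [set x | [/\ orthogonal x.1.1,
     (forall Phi, orthogonal Phi -> LS x.1.1 <= LS Phi),
     FK x.1.2 x.2 &
     forall W H, FK W H -> CS x.1.1 x.1.2 x.2 <= CS x.1.1 W H]].

End TLNMF.

From Pilot Require Import Defs.
From HB Require Import structures.
From mathcomp Require Import all_boot all_order all_algebra.
From mathcomp Require Import all_classical all_reals all_analysis.
From mathcomp Require Import lra.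
Import Order.TTheory GRing.Theory Num.Theory.
Import numFieldTopology.Exports numFieldNormedType.Exports.
Local Open Scope ring_scope.
Local Open Scope classical_set_scope.

(* O(M) is compact and the columns of W range over the probability simplex,
   so only H can escape to infinity, and it cannot do so on a sublevel set of
   C_S: some entry of each column of W is at least 1/M, so a large entry of H
   makes an entry of W H large, and the corresponding term
   ln([W H]_mn + eps0) then dominates C_S, whose summands are all at least
   ln eps0.  Hence the sublevel sets of the continuous cost on the closed
   feasible set are compact, which yields minimizers, and the solution sets,
   being closed, are compact.  For JD+NMF the Phi-component is a minimizer of
   L_S over the compact O(M), and C_S(Phi, W0, 0) is bounded over O(M). *)

Lemma ler_sum_term {R : numDomainType} {I : finType} (F : I -> R) j :
  (forall i, 0 <= F i) -> F j <= \sum_i F i.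
Proof. by move=> F_ge0; rewrite (bigD1 j) //= lerDl sumr_ge0. Qed.

Lemma exists_sum_le_card_mul {R : realDomainType} {I : finType} (F : I -> R) :
  (0 < #|I|)%N -> exists i, \sum_j F j <= #|I|%:R * F i.
Proof.
case/card_gt0P => i0 _; case: (@arg_maxP _ _ I i0 predT F) => // i _ Fi_max.
exists i; apply: (@le_trans _ _ (\sum_(j : I) F i)).
  by apply: ler_sum => j _; exact: Fi_max.
by rewrite sumr_const mulr_natl.
Qed.

Section ContinuousReal.
Context {R : realType} {T : topologicalType}.

Lemma continuous_sum (I : Type) (r : seq I) (P : pred I) (F : I -> T -> R) :
  (forall i, continuous (F i)) -> continuous (fun x => \sum_(i <- r | P i) F i x).
Proof.
move=> F_cont; rewrite (_ : (fun x => _) = \sum_(i <- r | P i) F i); last first.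
  by apply/funext => x; rewrite fct_sumE.
apply: (big_ind (fun g : T -> R => continuous g)) => [x|g h g_cont h_cont x|i _].
- exact: cvg_cst.
- exact: continuousD (g_cont x) (h_cont x).
- exact: F_cont.
Qed.

Lemma closed_fun_le [f g : T -> R] :
  continuous f -> continuous g -> closed [set x | f x <= g x].
Proof.
move=> f_cont g_cont.
have -> : [set x | f x <= g x] = (fun x => f x - g x) @^-1` [set r | r <= 0].
  by apply/seteqP; split => x /=; rewrite subr_le0.
apply: preimage_closed (@closed_le _ _) => x _.
exact: continuousB (f_cont x) (g_cont x).
Qed.

Lemma closed_fun_eq [f g : T -> R] :
  continuous f -> continuous g -> closed [set x | f x = g x].
Proof.
move=> f_cont g_cont.
have -> : [set x | f x = g x] = [set x | f x <= g x] `&` [set x | g x <= f x].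
  apply/seteqP; split => x /=; first by move=> ->.
  by case=> *; apply/eqP; rewrite eq_le; apply/andP.
by apply: closedI; exact: closed_fun_le.
Qed.

Lemma closed_forall (I : Type) (P : I -> set T) :
  (forall i, closed (P i)) -> closed [set x | forall i, P i x].
Proof.
move=> P_closed; have -> : [set x | forall i, P i x] = \bigcap_(i in setT) P i.
  by apply/seteqP; split => x /= Px i //; exact: Px.
by apply: closed_bigI => i _; exact: P_closed.
Qed.

Lemma closed_le_forall [U : Type] [A : set U] [f : T -> R] [g : U -> T -> R] :
  continuous f -> (forall y, continuous (g y)) ->
  closed [set x | forall y, A y -> f x <= g y x].
Proof.
move=> f_cont g_cont.
have -> : [set x | forall y, A y -> f x <= g y x] =
    \bigcap_(y in A) [set x | f x <= g y x] by [].
by apply: closed_bigI => y _; exact: closed_fun_le.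
Qed.

Definition argmin_set (A : set T) (f : T -> R) : set T :=
  [set x | A x /\ forall y, A y -> f x <= f y].

Lemma closed_argmin_set [A : set T] [f : T -> R] :
  closed A -> continuous f -> closed (argmin_set A f).
Proof.
move=> A_closed f_cont.
apply: (@closedI _ A [set x | forall y, A y -> f x <= f y]) => //.
exact: (@closed_le_forall T A f (fun y _ => f y) f_cont
  (fun y => @cst_continuous _ _ (f y))).
Qed.

Lemma argmin_set_nonempty_compact [A B : set T] [f : T -> R] [a0 : T] :
  closed A -> compact B -> continuous f -> A a0 ->
  (forall x, A x -> f x <= f a0 -> B x) ->
  argmin_set A f !=set0 /\ compact (argmin_set A f).
Proof.
move=> A_closed B_compact f_cont Aa0 sublevelB.
have Ba0 : B a0 by apply: sublevelB.
have [m /set_mem [Bm Am] m_min] := compact_EVT_min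
  (ex_intro _ a0 (conj Ba0 Aa0)) (compact_closedI B_compact A_closed)
  (continuous_subspaceT f_cont).
split.
  exists m; split => // y Ay; have [fy_le|fa0_lt] := leP (f y) (f a0).
    by apply: m_min; apply/mem_set; split => //; exact: sublevelB.
  by apply: le_trans (ltW fa0_lt); apply: m_min; exact/mem_set.
apply: subclosed_compact (closed_argmin_set A_closed f_cont) B_compact _.
by move=> x [Ax x_min]; apply: sublevelB (x_min _ Aa0).
Qed.

End ContinuousReal.

Lemma continuous_id {T : topologicalType} : continuous (@id T).
Proof. by move=> x; exact: cvg_id. Qed.

Lemma continuous_fst {U V : topologicalType} : continuous (@fst U V).
Proof. by move=> x; exact: cvg_fst. Qed.

Lemma continuous_snd {U V : topologicalType} : continuous (@snd U V).
Proof. by move=> x; exact: cvg_snd. Qed.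

Section MatrixTopology.
Context {R : realType}.

Lemma continuous_mx_entry [T : topologicalType] [m n] [f : T -> 'M[R]_(m, n)] i j :
  continuous f -> continuous (fun x => f x i j).
Proof.
by move=> f_cont x; apply: continuous_comp (f_cont x) (@coord_continuous R m n i j (f x)).
Qed.

Lemma continuous_mulmx_entry [T : topologicalType] [m n p]
    [f : T -> 'M[R]_(m, n)] [g : T -> 'M[R]_(n, p)] i j :
  continuous f -> continuous g -> continuous (fun x => (f x *m g x) i j).
Proof.
move=> f_cont g_cont; under eq_fun do rewrite mxE.
apply: continuous_sum => k x.
exact: continuousM (continuous_mx_entry i k f_cont x) (continuous_mx_entry k j g_cont x).
Qed.

Lemma continuous_vec_mx m n : continuous (@vec_mx R m n).
Proof.
move=> v A /nbhs_ballP [e e_gt0 ballA].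
apply/nbhs_ballP; exists e => // w [_ vw]; apply: ballA; split => // i j.
by rewrite !mxE; exact: vw.
Qed.

Definition mx_box m n (c : R) : set 'M[R]_(m, n) :=
  [set X | forall i j, `|X i j| <= c].

Lemma mx_box_compact m n (c : R) : compact (mx_box m n c).
Proof.
pose row_box := [set v : 'rV[R]_(m * n) | forall k, `[- c, c]%classic (v ord0 k)].
have row_box_compact : compact row_box.
  by apply: (@rV_compact _ _ (fun=> `[- c, c]%classic)) => k; exact: segment_compact.
have box_closed : closed (mx_box m n c).
  apply: closed_forall => i; apply: closed_forall => j.
  apply: closed_fun_le _ (@cst_continuous _ _ c) => X.
  exact: continuous_comp (@coord_continuous R m n i j X) (@norm_continuous R R _).
apply: subclosed_compact box_closed
  (continuous_compact (continuous_subspaceT (@continuous_vec_mx m n)) row_box_compact) _.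
move=> X X_box; exists (mxvec X); last exact: mxvecK.
move=> k /=; case/mxvec_indexP: k => i j.
by rewrite mxvecE in_itv /= -ler_norml; exact: X_box.
Qed.

End MatrixTopology.

Section TLNMF.
Variables (R : realType) (M N K S : nat) (eps0 : R) (Y : 'I_S -> 'M[R]_(M, N)).
Hypotheses (M_gt0 : (0 < M)%N) (eps0_gt0 : 0 < eps0).

Implicit Types (Phi : 'M[R]_M) (W : 'M[R]_(M, K)) (H : 'M[R]_(K, N)).

Local Notation triple := ('M[R]_M * 'M[R]_(M, K) * 'M[R]_(K, N))%type.

Lemma ES_ge0 Phi m n : 0 <= ES Y Phi m n.
Proof. by rewrite /ES mulr_ge0 ?invr_ge0 ?ler0n // sumr_ge0 // => s _; exact: sqr_ge0. Qed.

Lemma continuous_ES m n : continuous (fun Phi => ES Y Phi m n).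
Proof.
have sum_cont : continuous (fun Phi : 'M[R]_M => \sum_(s < S) (Phi *m Y s) m n ^+ 2).
  apply: continuous_sum => s Phi.
  have entry_cont := continuous_mulmx_entry m n continuous_id (@cst_continuous _ _ (Y s)).
  exact: continuousM (entry_cont Phi) (entry_cont Phi).
by move=> Phi; apply: continuousM (@cst_continuous _ _ _ Phi) (sum_cont Phi).
Qed.

Lemma continuous_LS : continuous (LS eps0 Y).
Proof.
have sum_cont :
    continuous (fun Phi => \sum_(m < M) \sum_(n < N) ln (ES Y Phi m n + eps0)).
  apply: continuous_sum => m; apply: continuous_sum => n Phi.
  have ES_eps0_gt0 : 0 < ES Y Phi m n + eps0 by rewrite ltr_wpDl ?ES_ge0.
  have ES_cont := continuousD (continuous_ES m n Phi) (@cst_continuous _ _ eps0 Phi).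
  exact: continuous_comp ES_cont (continuous_ln ES_eps0_gt0).
by move=> Phi; apply: continuousD (@cst_continuous _ _ _ Phi) (sum_cont Phi).
Qed.

Definition orth_set : set 'M[R]_M := [set Phi : 'M[R]_M | Defs.orthogonal Phi].

Lemma orthogonal1 : Defs.orthogonal (1%:M : 'M[R]_M).
Proof. by rewrite /Defs.orthogonal trmx1 mulmx1. Qed.

Lemma orthogonal_mx_box Phi : Defs.orthogonal Phi -> mx_box M M 1 Phi.
Proof.
move=> Phi_orth i j.
have col_norm1 : \sum_k Phi k j ^+ 2 = 1.
  have := congr1 (fun A : 'M[R]_M => A j j) Phi_orth; rewrite !mxE eqxx mulr1n => <-.
  by apply: eq_bigr => k _; rewrite mxE expr2.
have : `|Phi i j| ^+ 2 <= 1.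
  rewrite -normrX ger0_norm ?sqr_ge0 // -col_norm1.
  exact: (ler_sum_term (fun k => Phi k j ^+ 2)) (fun k => sqr_ge0 _).
by rewrite expr_le1.
Qed.

Lemma closed_orth_set : closed orth_set.
Proof.
have -> : orth_set =
    [set Phi | forall i j, \sum_k Phi k i * Phi k j = (1%:M : 'M[R]_M) i j].
  apply/seteqP; split => Phi /=.
    by move=> Phi_orth i j; rewrite -Phi_orth mxE; apply: eq_bigr => k _; rewrite mxE.
  move=> Phi_orth; apply/matrixP => i j; rewrite -Phi_orth mxE.
  by apply: eq_bigr => k _; rewrite mxE.
apply: closed_forall => i; apply: closed_forall => j.
apply: closed_fun_eq _ (@cst_continuous _ _ _); apply: continuous_sum => k Phi.
exact: continuousM (continuous_mx_entry k i continuous_id Phi)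
  (continuous_mx_entry k j continuous_id Phi).
Qed.

Lemma compact_orth_set : compact orth_set.
Proof. exact: subclosed_compact closed_orth_set (mx_box_compact M M 1) orthogonal_mx_box. Qed.

Lemma FK_mx_box {W H} : FK W H -> mx_box M K 1 W.
Proof.
case=> _ [_ col_norm1] m k; rewrite -(col_norm1 k).
exact: (ler_sum_term (fun m => `|W m k|)) (fun m => normr_ge0 _).
Qed.

Lemma FK_mulmx_ge_term {W H} m k n : FK W H -> W m k * H k n <= (W *m H) m n.
Proof.
case=> W_ge0 [H_ge0 _]; rewrite mxE.
exact: (ler_sum_term (fun k => W m k * H k n)) (fun k => mulr_ge0 (W_ge0 _ _) (H_ge0 _ _)).
Qed.

Lemma FK_mulmx_ge0 {W H} m n : FK W H -> 0 <= (W *m H) m n.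
Proof.
case=> W_ge0 [H_ge0 _]; rewrite mxE.
by apply: sumr_ge0 => k _; exact: mulr_ge0.
Qed.

Lemma FK_column_large_entry {W H} k : FK W H -> exists m, 1 <= M%:R * W m k.
Proof.
case=> W_ge0 [_ col_norm1].
have [|m col_le] := exists_sum_le_card_mul (fun m => W m k); first by rewrite card_ord.
exists m; rewrite card_ord in col_le.
by rewrite -[leLHS](col_norm1 k) (eq_bigr _ (fun i _ => ger0_norm (W_ge0 i k))).
Qed.

Definition W0 : 'M[R]_(M, K) := \matrix_(m, k) (m == Ordinal M_gt0)%:R.

Lemma FK_W0 : FK W0 (0 : 'M[R]_(K, N)).
Proof.
split; first by move=> m k; rewrite mxE ler0n.
split; first by move=> k n; rewrite mxE.
move=> k; rewrite (bigD1 (Ordinal M_gt0)) //= big1 => [|m m_neq].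
  by rewrite mxE eqxx normr1 addr0.
by rewrite mxE (negbTE m_neq) normr0.
Qed.

(* [CSext] agrees with [CS] on [F_K], where [W *m H >= 0]; clipping at [0]
   keeps the denominators and the arguments of [ln] above [eps0], so [CSext]
   is continuous everywhere. *)
Definition CSext Phi W H : R :=
  \sum_(m < M) \sum_(n < N)
    ((ES Y Phi m n + eps0) / (Num.max ((W *m H) m n) 0 + eps0)
     + ln (Num.max ((W *m H) m n) 0 + eps0)).

Lemma CSext_FK Phi {W H} : FK W H -> CSext Phi W H = CS eps0 Y Phi W H.
Proof.
move=> WH_FK; apply: eq_bigr => m _; apply: eq_bigr => n _.
by rewrite max_l // (FK_mulmx_ge0 m n WH_FK).
Qed.

Lemma continuous_CSext {T : topologicalType} {P : T -> 'M[R]_M}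
    {Wf : T -> 'M[R]_(M, K)} {Hf : T -> 'M[R]_(K, N)} :
  continuous P -> continuous Wf -> continuous Hf ->
  continuous (fun x => CSext (P x) (Wf x) (Hf x)).
Proof.
move=> P_cont W_cont H_cont; apply: continuous_sum => m; apply: continuous_sum => n x.
pose d x := Num.max ((Wf x *m Hf x) m n) 0 + eps0.
have d_gt0 : 0 < d x by rewrite ltr_wpDl // le_max lexx orbT.
have d_cont : {for x, continuous d}.
  apply: continuousD (@cst_continuous _ _ eps0 x).
  exact: continuous_max (continuous_mulmx_entry m n W_cont H_cont x) (@cst_continuous _ _ 0 x).
have ES_cont := continuous_comp (P_cont x) (continuous_ES m n (P x)).
apply: continuousD (continuous_comp d_cont (continuous_ln d_gt0)).
apply: continuousM (continuousD ES_cont (@cst_continuous _ _ eps0 x)) _.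
exact: continuousV (lt0r_neq0 d_gt0) d_cont.
Qed.

(* Every summand of [CS] is at least [ln eps0], and the one at [(m, n)] is at
   least [ln ((W *m H) m n + eps0)]. *)
Lemma CS_ge_entry Phi {W H} m n : FK W H ->
  (M * N)%:R * ln eps0 + (ln ((W *m H) m n + eps0) - ln eps0) <= CS eps0 Y Phi W H.
Proof.
move=> WH_FK.
pose t m n := (ES Y Phi m n + eps0) / ((W *m H) m n + eps0)
              + ln ((W *m H) m n + eps0) - ln eps0.
have WH_eps0_gt0 m' n' : 0 < (W *m H) m' n' + eps0.
  by rewrite ltr_wpDl ?(FK_mulmx_ge0 m' n' WH_FK).
have ln_le_t m' n' : ln ((W *m H) m' n' + eps0) - ln eps0 <= t m' n'.
  by rewrite lerD2r lerDr divr_ge0 ?ltW // ltr_wpDl ?ES_ge0.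
have t_ge0 m' n' : 0 <= t m' n'.
  apply: le_trans (ln_le_t m' n'); rewrite subr_ge0 ler_ln ?posrE //.
  by rewrite lerDr (FK_mulmx_ge0 m' n' WH_FK).
have -> : CS eps0 Y Phi W H = \sum_(m' < M) \sum_(n' < N) (ln eps0 + t m' n').
  by apply: eq_bigr => m' _; apply: eq_bigr => n' _; rewrite /t [RHS]addrC subrK.
under eq_bigr do rewrite big_split sumr_const card_ord.
rewrite big_split sumr_const card_ord /= -mulrnA mulnC mulr_natl lerD2l.
apply: le_trans (ln_le_t m n) _.
apply: le_trans (ler_sum_term (fun n' => t m n') n (t_ge0 m)) _.
exact: ler_sum_term (fun m' => \sum_(n' < N) t m' n') m
  (fun m' => sumr_ge0 _ (fun n' _ => t_ge0 m' n')).
Qed.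

Lemma CS_sublevel_bounded (L : R) : exists c : R,
  forall Phi W H, FK W H -> CS eps0 Y Phi W H <= L -> forall k n, H k n <= c.
Proof.
pose L' := L - (M * N)%:R * ln eps0 + ln eps0.
have M_gt0' : 0 < M%:R :> R by rewrite ltr0n.
exists (M%:R * expR L') => Phi W H WH_FK CS_le k n.
rewrite leNgt; apply/negP => H_gt.
have [m W_large] := FK_column_large_entry k WH_FK.
have WH_gt : expR L' < (W *m H) m n.
  rewrite -(ltr_pM2l M_gt0'); apply: (lt_le_trans H_gt).
  apply: (@le_trans _ _ (M%:R * W m k * H k n)).
    by rewrite ler_peMl // (le_trans _ (ltW H_gt)) // mulr_ge0 ?ler0n ?expR_ge0.
  by rewrite -mulrA ler_wpM2l ?ler0n // (FK_mulmx_ge_term m k n WH_FK).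
have ln_gt : L' < ln ((W *m H) m n + eps0).
  rewrite -[L']expRK ltr_ln ?posrE ?expR_gt0 //.
    by apply: lt_le_trans WH_gt _; rewrite lerDl ltW.
  by rewrite ltr_wpDl // (FK_mulmx_ge0 m n WH_FK).
have := CS_ge_entry Phi m n WH_FK; rewrite /L' in ln_gt; lra.
Qed.

Lemma CS_W0_bounded : exists C : R,
  forall Phi, Defs.orthogonal Phi -> CS eps0 Y Phi W0 0 <= C.
Proof.
have [Phi_max _ Phi_max_max] := @compact_EVT_max _ R (fun Phi => CSext Phi W0 0) orth_set
  (ex_intro _ 1%:M orthogonal1) compact_orth_set
  (continuous_subspaceT (continuous_CSext continuous_id
     (@cst_continuous _ _ W0) (@cst_continuous _ _ (0 : 'M[R]_(K, N))))).
exists (CSext Phi_max W0 0) => Phi Phi_orth.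
by rewrite -(CSext_FK Phi FK_W0); apply: Phi_max_max; exact: mem_set.
Qed.

Lemma continuous_triple_Phi : continuous (fun x : triple => x.1.1).
Proof. by move=> x; exact: continuous_comp (continuous_fst x) (continuous_fst x.1). Qed.

Lemma continuous_triple_W : continuous (fun x : triple => x.1.2).
Proof. by move=> x; exact: continuous_comp (continuous_fst x) (continuous_snd x.1). Qed.

Lemma continuous_triple_H : continuous (fun x : triple => x.2).
Proof. exact: continuous_snd. Qed.

Definition CSt (x : triple) : R := CSext x.1.1 x.1.2 x.2.

Lemma continuous_CSt : continuous CSt.
Proof.
exact: continuous_CSext continuous_triple_Phi continuous_triple_W continuous_triple_H.
Qed.

Lemma closed_FK : closed [set x : triple | FK x.1.2 x.2].
Proof.
have -> : [set x : triple | FK x.1.2 x.2] =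
    [set x : triple | forall m k, 0 <= x.1.2 m k]
    `&` ([set x : triple | forall k n, 0 <= x.2 k n]
    `&` [set x : triple | forall k, \sum_(m < M) `|x.1.2 m k| = 1]) by [].
apply: closedI; last apply: closedI.
- apply: closed_forall => m; apply: closed_forall => k.
  exact: closed_fun_le (@cst_continuous _ _ 0) (continuous_mx_entry m k continuous_triple_W).
- apply: closed_forall => k; apply: closed_forall => n.
  exact: closed_fun_le (@cst_continuous _ _ 0) (continuous_mx_entry k n continuous_triple_H).
- apply: closed_forall => k; apply: closed_fun_eq _ (@cst_continuous _ _ _).
  apply: continuous_sum => m x.
  exact: continuous_comp (continuous_mx_entry m k continuous_triple_W x) (@norm_continuous R R _).
Qed.

Definition feasible : set triple :=
  [set x : triple | Defs.orthogonal x.1.1 /\ FK x.1.2 x.2].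

Lemma closed_feasible : closed feasible.
Proof.
have -> : feasible =
    (fun x : triple => x.1.1) @^-1` orth_set `&` [set x | FK x.1.2 x.2] by [].
apply: closedI closed_FK.
exact: preimage_closed (fun x _ => continuous_triple_Phi x) closed_orth_set.
Qed.

Definition H_le (c : R) : set triple := [set x : triple | forall k n, x.2 k n <= c].

Lemma compact_feasible_H_le c : compact (feasible `&` H_le c).
Proof.
have closed_H_le : closed (H_le c).
  apply: closed_forall => k; apply: closed_forall => n.
  exact: closed_fun_le (continuous_mx_entry k n continuous_triple_H) (@cst_continuous _ _ c).
apply: subclosed_compact (closedI closed_feasible closed_H_le)
  (compact_setX (compact_setX (mx_box_compact M M 1) (mx_box_compact M K 1))
     (mx_box_compact K N c)) _.
move=> x [[Phi_orth WH_FK] H_le_c]; split; first split.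
- exact: orthogonal_mx_box.
- exact: FK_mx_box WH_FK.
- move=> k n; case: WH_FK => _ [H_ge0 _].
  by rewrite ger0_norm ?H_ge0 ?H_le_c.
Qed.

Lemma feasible_sublevel_bounded (L : R) :
  exists c, forall x, feasible x -> CSt x <= L -> H_le c x.
Proof.
have [c CS_le_c] := CS_sublevel_bounded L.
exists c => x [_ WH_FK]; rewrite /CSt CSext_FK //.
exact: CS_le_c.
Qed.

Lemma feasible_W0_sublevel_bounded : exists c, forall x Phi,
  feasible x -> Defs.orthogonal Phi -> CSt x <= CSt (Phi, W0, 0) -> H_le c x.
Proof.
have [C CS_W0_le] := CS_W0_bounded.
have [c sublevel] := feasible_sublevel_bounded C.
exists c => x Phi x_feas Phi_orth x_le; apply: sublevel x_feas _.
apply: le_trans x_le _; rewrite /CSt /= CSext_FK; [exact: CS_W0_le | exact: FK_W0].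
Qed.

Lemma Omega_star_argmin : @Omega_star R M N K S eps0 Y = argmin_set feasible CSt.
Proof.
apply/seteqP; split => x.
  case=> Phi_orth WH_FK x_min; split => // y [y_orth y_FK].
  by rewrite /CSt !CSext_FK //; exact: x_min.
case=> [[Phi_orth WH_FK] x_min]; split => // Phi W H Phi_orth' WH_FK'.
by have := x_min (Phi, W, H) (conj Phi_orth' WH_FK'); rewrite /CSt !CSext_FK.
Qed.

Lemma Omega_star_nonempty_compact :
  @Omega_star R M N K S eps0 Y !=set0 /\ compact (@Omega_star R M N K S eps0 Y).
Proof.
have [c sublevel] := feasible_W0_sublevel_bounded.
rewrite Omega_star_argmin.
have := argmin_set_nonempty_compact (a0 := ((1%:M, W0, 0) : triple)) closed_feasible
  (compact_feasible_H_le c) continuous_CSt (conj orthogonal1 FK_W0).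
apply=> x x_feas x_le.
by split => //; exact: sublevel x_feas orthogonal1 x_le.
Qed.

Definition jd_feasible : set triple :=
  [set x : triple | argmin_set orth_set (LS eps0 Y) x.1.1 /\ FK x.1.2 x.2].

Lemma closed_jd_feasible : closed jd_feasible.
Proof.
have -> : jd_feasible = (fun x : triple => x.1.1) @^-1` argmin_set orth_set (LS eps0 Y)
    `&` [set x | FK x.1.2 x.2] by [].
apply: closedI closed_FK.
exact: preimage_closed (fun x _ => continuous_triple_Phi x)
  (closed_argmin_set closed_orth_set continuous_LS).
Qed.

Lemma Omega_dot_eq : @Omega_dot R M N K S eps0 Y = jd_feasible `&`
  [set x | forall z : 'M[R]_(M, K) * 'M[R]_(K, N), FK z.1 z.2 ->
     CSt x <= CSext x.1.1 z.1 z.2].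
Proof.
apply/seteqP; split => x.
  case=> Phi_orth Phi_min WH_FK x_min; split => // z z_FK.
  by rewrite /CSt !CSext_FK //; exact: x_min.
case=> [[[Phi_orth Phi_min] WH_FK] x_min]; split => // W H WH_FK'.
by have := x_min (W, H) WH_FK'; rewrite /CSt !CSext_FK.
Qed.

Lemma closed_Omega_dot : closed (@Omega_dot R M N K S eps0 Y).
Proof.
rewrite Omega_dot_eq; apply: closedI closed_jd_feasible _.
apply: (closed_le_forall (A := [set z | FK z.1 z.2])
  (g := fun z x => CSext x.1.1 z.1 z.2) continuous_CSt) => z.
exact: continuous_CSext continuous_triple_Phi (@cst_continuous _ _ z.1)
  (@cst_continuous _ _ z.2).
Qed.

Lemma Omega_dot_nonempty_compact :
  @Omega_dot R M N K S eps0 Y !=set0 /\ compact (@Omega_dot R M N K S eps0 Y).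
Proof.
have [c sublevel] := feasible_W0_sublevel_bounded.
have [[Phi1 Phi1_min] _] := argmin_set_nonempty_compact closed_orth_set
  compact_orth_set continuous_LS orthogonal1 (fun Phi Phi_orth _ => Phi_orth).
have jd_sublevel y : jd_feasible y -> CSt y <= CSt (Phi1, W0, 0) ->
    (feasible `&` H_le c) y.
  case=> [[y_orth _] WH_FK] y_le; have y_feas : feasible y by [].
  by split => //; exact: sublevel y_feas Phi1_min.1 y_le.
have [[x [x_jd x_min]] _] := argmin_set_nonempty_compact (a0 := ((Phi1, W0, 0) : triple))
  closed_jd_feasible (compact_feasible_H_le c) continuous_CSt (conj Phi1_min FK_W0)
  jd_sublevel.
split.
  exists x; rewrite Omega_dot_eq; split => // z z_FK.
  exact: (x_min (x.1.1, z.1, z.2) (conj x_jd.1 z_FK)).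
apply: subclosed_compact closed_Omega_dot (compact_feasible_H_le c) _.
rewrite Omega_dot_eq => y [[[y_orth _] WH_FK] y_min].
have y_feas : feasible y by [].
by split => //; exact: sublevel y_feas y_orth (y_min (W0, 0) FK_W0).
Qed.

End TLNMF.

Theorem theorem1 (R : realType) (M N K S : nat) (eps0 : R)
  (Y : 'I_S -> 'M[R]_(M, N)) :
  (0 < M)%N -> (0 < N)%N -> (0 < K)%N -> (0 < S)%N -> 0 < eps0 ->
  [/\ @Omega_star R M N K S eps0 Y !=set0, compact (@Omega_star R M N K S eps0 Y),
      @Omega_dot R M N K S eps0 Y !=set0 & compact (@Omega_dot R M N K S eps0 Y)].
Proof.
move=> M_gt0 _ _ _ eps0_gt0.
have [star_nonempty star_compact] :=
  @Omega_star_nonempty_compact R M N K S eps0 Y M_gt0 eps0_gt0.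
have [dot_nonempty dot_compact] :=
  @Omega_dot_nonempty_compact R M N K S eps0 Y M_gt0 eps0_gt0.
by split.
Qed.
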